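(* Let $L=\{\ell_1,\dots,\ell_n\}$, $R=\{r_1,\dots,r_d\}$ and let $T_1,T_2$ be two compatible spanning trees of the complete bipartite graph on $L\sqcup R$, where $T_1$ has right degree vector $v$ and $T_2$ has right degree vector $v+e_p-e_q$ for some $p,q\in[d]$. Then $T_1\cap T_2$ contains a maximal tope with right degree vector $v-\mathbf{1}_{[d]\setminus\{p\}}$. Furthermore, if $\ell_s$ has degree $1$ in both $T_1$ and $T_2$, then $T_1$ and $T_2$ contain the same edge incident with $\ell_s$.
   Context: Graphs are identified with edge sets; right degree vector $=(\deg r_1,\dots,\deg r_d)$; $e_p$ is a standard unit vector and $\mathbf{1}_A$ the 0/1 indicator vector of $A\subseteq[d]$. Two graphs are compatible if for all $J\subseteq L$, $I\subseteq R$ such that both contain a perfect matching between $J$ and $I$, these perfect matchings are equal. A maximal tope with right degree vector $w$ is a bipartite graph on $L\sqcup R$ in which every node of $L$ has degree exactly $1$ and $r_i$ has degree $w_i$. *)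

(* Left nodes L = 'I_n, right nodes R = 'I_d.
   A bipartite graph on L ⊔ R is identified with its edge set {set 'I_n * 'I_d}. *)
From mathcomp Require Import all_boot all_order all_algebra.
Set Implicit Arguments. Unset Strict Implicit. Unset Printing Implicit Defensive.
Import GRing.Theory.
Local Open Scope ring_scope.

Section Bip.
Variables n d : nat.
Definition bgraph := {set 'I_n * 'I_d}.

Definition badj (G : bgraph) : rel ('I_n + 'I_d) :=
  fun x y => match x, y with
  | inl l, inr r => (l, r) \in G
  | inr r, inl l => (l, r) \in G
  | _, _ => false
  end.

Definition bconnected (G : bgraph) : Prop :=
  forall x y : 'I_n + 'I_d, connect (badj G) x y.

(* acyclic: no edge lies on a cycle, i.e. deleting any edge disconnects its endpoints *)
Definition bacyclic (G : bgraph) : Prop :=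
  forall e, e \in G -> ~~ connect (badj (G :\ e)) (inl e.1) (inr e.2).

Definition spanning_tree (G : bgraph) : Prop := bconnected G /\ bacyclic G.

Definition ldeg (G : bgraph) (l : 'I_n) : nat := #|[set e in G | e.1 == l]|.
Definition rdeg (G : bgraph) (r : 'I_d) : nat := #|[set e in G | e.2 == r]|.

Definition perfect_matching (J : {set 'I_n}) (I : {set 'I_d}) (M : bgraph) : Prop :=
  [/\ forall e, e \in M -> (e.1 \in J) && (e.2 \in I),
      forall l, l \in J -> ldeg M l = 1%N
    & forall r, r \in I -> rdeg M r = 1%N].

Definition compatible (G1 G2 : bgraph) : Prop :=
  forall (J : {set 'I_n}) (I : {set 'I_d}) (M1 M2 : bgraph),
    M1 \subset G1 -> perfect_matching J I M1 ->
    M2 \subset G2 -> perfect_matching J I M2 -> M1 = M2.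

Definition maximal_tope (w : 'I_d -> int) (G : bgraph) : Prop :=
  (forall l, ldeg G l = 1%N) /\ (forall r, (rdeg G r)%:Z = w r).
End Bip.

(* Root a spanning tree T at a right vertex r_p.  Every left vertex l has a
   unique edge of T pointing towards r_p (the first edge of the tree path from
   l to r_p), and these edges form a maximal tope of T; every right vertex
   r <> r_p loses exactly its own edge towards the root, so the tope has right
   degrees deg_T - 1_{[d] \ {p}}.  Rooting T1 at r_p and T2 at r_q therefore
   gives maximal topes in T1 and T2 with the same right degree vector
   v - 1_{[d] \ {p}}.  Two such topes must coincide when T1 and T2 are
   compatible: where they disagree, following "left vertex -> its T1-neighbour
   -> a left vertex with that T2-neighbour" eventually cycles, and the cycle
   carries two distinct perfect matchings on the same vertex sets.  The common
   tope lies in T1 :&: T2, and a left leaf's unique edge is its tope edge in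
   both trees. *)
From mathcomp Require Import all_boot all_order all_algebra zify.
Set Implicit Arguments. Unset Strict Implicit. Unset Printing Implicit Defensive.

Section TreePaths.
Variables n d : nat.
Notation V := ('I_n + 'I_d)%type.
Implicit Types (G H T : bgraph n d) (x y z t : V) (e : 'I_n * 'I_d).

Definition incident e x := (x == inl e.1) || (x == inr e.2).

Lemma incident_inl e l : incident e (inl l) = (e.1 == l).
Proof. by rewrite /incident orbF; apply/eqP/eqP => [[]|->]. Qed.

Lemma incident_inr e r : incident e (inr r) = (e.2 == r).
Proof. by rewrite /incident /=; apply/eqP/eqP => [[]|->]. Qed.

Lemma badj_sym G : symmetric (badj G).
Proof. by case=> a [b|b] //; case. Qed.

Lemma connect_badjC G x y : connect (badj G) x y = connect (badj G) y x.
Proof. exact: sym_connect_sym (badj_sym G) x y. Qed.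

Lemma connect_badj_sub G H x y :
  G \subset H -> connect (badj G) x y -> connect (badj H) x y.
Proof.
move=> sGH; apply: connect_sub => a b ab; apply: connect1.
by move: ab; case: a => a; case: b => b //= /(subsetP sGH).
Qed.

Lemma badj_neq G x z : badj G x z -> x != z.
Proof. by case: x => a; case: z => b. Qed.

Lemma badj_incident G x z :
  badj G x z -> exists e, [/\ e \in G, incident e x & incident e z].
Proof.
case: x => a; case: z => b //= h.
  by exists (a, b); rewrite /incident /= !eqxx ?orbT.
by exists (b, a); rewrite /incident /= !eqxx ?orbT.
Qed.

Lemma badj_setD1 G e x z :
  badj G x z -> ~~ badj (G :\ e) x z -> incident e x && incident e z.
Proof.
rewrite /incident; case: x => a; case: z => b //=; rewrite !inE => ->;
  rewrite andbT negbK => /eqP <- /=; rewrite !eqxx ?orbT //.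
Qed.

Lemma connect_ends H e : e \in H -> connect (badj H) (inl e.1) (inr e.2).
Proof. by case: e => a b he; apply: connect1. Qed.

Lemma connect_incident H e z x :
  e \in H -> incident e z -> incident e x -> connect (badj H) z x.
Proof.
move=> he; rewrite /incident => /orP[]/eqP-> /orP[]/eqP->; rewrite ?connect0 //.
  exact: connect_ends.
by rewrite connect_badjC; apply: connect_ends.
Qed.

Lemma connect_incident_ends H e x z :
  incident e x -> incident e z -> x != z -> connect (badj H) x z ->
  connect (badj H) (inl e.1) (inr e.2).
Proof.
rewrite /incident => /orP[]/eqP-> /orP[]/eqP->; rewrite ?eqxx // => _.
by rewrite connect_badjC.
Qed.

Lemma connect_setD1P G e x y : connect (badj G) x y ->
  connect (badj (G :\ e)) x y \/
  exists2 z, incident e z & connect (badj (G :\ e)) x z.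
Proof.
move=> /connectP[p pp ->]; elim: p x pp => [|z p IH] x /=.
  by left; apply: connect0.
move=> /andP[axz pz]; case: (boolP (badj (G :\ e) x z)) => bxz.
  have cxz := connect1 bxz.
  case: (IH z pz) => [h|[w ew h]]; first by left; apply: connect_trans h.
  by right; exists w => //; apply: connect_trans h.
by right; exists x; [case/andP: (badj_setD1 axz bxz) | apply: connect0].
Qed.

Lemma path_setD1 T e x z s : incident e x -> path (badj T) z s ->
  x \notin z :: s -> path (badj (T :\ e)) z s.
Proof.
move=> ex; elim: s z => [|w s IH] z //= /andP[bzw ps].
rewrite !inE negb_or => /andP[xz]; rewrite negb_or => /andP[xw xs].
rewrite IH ?inE ?negb_or ?xw //= andbT.
apply/negPn/negP => nb; case/andP: (badj_setD1 bzw nb) => ez ew.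
move: bzw ex ez ew xz xw; rewrite /incident.
move=> bzw /orP[]/eqP ex /orP[]/eqP ez /orP[]/eqP ew; subst;
  rewrite ?eqxx //= in bzw *.
Qed.

(* In an acyclic graph the first edge of a shortest path from x to t is a cut
   edge: a detour around it would close a cycle through it. *)
Lemma cut_edge_exists T x t : bacyclic T -> x != t -> connect (badj T) x t ->
  exists e, [/\ e \in T, incident e x & ~~ connect (badj (T :\ e)) x t].
Proof.
move=> acT xt /connectP[p0 pp0 tE]; move: xt; rewrite tE.
case: (shortenP pp0) => p pp up _; case: p pp up => [|z s] /=; first by rewrite eqxx.
move=> /andP[bxz ps] /andP[xn _] _.
case: (badj_incident bxz) => e [eT ex ez]; exists e; split => //.
apply/negP => cxt.
have czt : connect (badj (T :\ e)) z (last z s).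
  by apply/connectP; exists s => //; apply: path_setD1 ex ps xn.
have cxz : connect (badj (T :\ e)) x z.
  by apply: connect_trans cxt _; rewrite connect_badjC.
by move/negP: (acT e eT); apply; apply: connect_incident_ends ex ez (badj_neq bxz) cxz.
Qed.

Lemma cut_edge_uniq T e1 e2 x t : e1 \in T -> e2 \in T ->
  incident e1 x -> incident e2 x -> connect (badj T) x t ->
  ~~ connect (badj (T :\ e1)) x t -> ~~ connect (badj (T :\ e2)) x t -> e1 = e2.
Proof.
move=> h1 h2 x1 x2 cxt n1 n2; apply/eqP/negPn/negP => ne.
have s12 : T :\ e2 :\ e1 \subset T :\ e1.
  by apply/subsetP=> w; rewrite !inE => /and3P[-> _ ->].
have s21 : T :\ e2 :\ e1 \subset T :\ e2.
  by apply/subsetP=> w; rewrite !inE => /and3P[_ -> ->].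
have i21 : e2 \in T :\ e1 by rewrite !inE eq_sym ne.
have i12 : e1 \in T :\ e2 by rewrite !inE ne.
rewrite connect_badjC in cxt; case: (connect_setD1P e2 cxt) => [c|[w ew c]].
  by move: n2; rewrite connect_badjC c.
case: (connect_setD1P e1 c) => [c'|[w' ew' c']].
  move: n1; rewrite connect_badjC (connect_trans (connect_badj_sub s12 c')) //.
  exact: connect_incident ew x2.
move: n2; rewrite connect_badjC (connect_trans (connect_badj_sub s21 c')) //.
exact: connect_incident ew' x1.
Qed.

Lemma tree_cut_side T e r : spanning_tree T -> e \in T ->
  connect (badj (T :\ e)) (inl e.1) (inr r) =
  ~~ connect (badj (T :\ e)) (inr e.2) (inr r).
Proof.
case=> cnT acT eT; apply/idP/idP.
  move=> c1; apply/negP => c2; move/negP: (acT e eT); apply.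
  by apply: connect_trans c1 _; rewrite connect_badjC.
move=> /negP n2; case: (connect_setD1P e (cnT (inr r) (inl e.1))) => [c|[z ez c]].
  by rewrite connect_badjC.
move: ez; rewrite /incident => /orP[]/eqP ez; subst z; first by rewrite connect_badjC.
by case: n2; rewrite connect_badjC.
Qed.

(* The edges of T pointing towards the root r_p: each is the first edge of the
   tree path from its left end to r_p. *)
Definition rooted_tope T p :=
  [set e in T | ~~ connect (badj (T :\ e)) (inl e.1) (inr p)].

Lemma rooted_tope_sub T p : rooted_tope T p \subset T.
Proof. by apply/subsetP => e; rewrite inE => /andP[]. Qed.

Lemma rooted_tope_ldeg T p l : spanning_tree T -> ldeg (rooted_tope T p) l = 1%N.
Proof.
move=> [cnT acT].
have [e0 [e0T e0l e0cut]] := cut_edge_exists acT (isT : inl l != inr p) (cnT _ _).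
apply/eqP/cards1P; exists e0; apply/setP => e; rewrite !inE.
apply/idP/idP => [/andP[/andP[eT ecut] /eqP el]|/eqP->].
  apply/eqP; apply: (cut_edge_uniq eT e0T _ e0l (cnT (inl l) (inr p))) => //.
    by rewrite incident_inl el.
  by rewrite -el.
by move: e0l; rewrite incident_inl => /eqP el; rewrite e0T el e0cut eqxx.
Qed.

Lemma rooted_tope_rdeg T p r : spanning_tree T ->
  (rdeg (rooted_tope T p) r + (r != p))%N = rdeg T r.
Proof.
move=> stT; have [cnT acT] := stT.
have [->|rp] := eqVneq r p.
  rewrite addn0 /rdeg; apply: eq_card => e; rewrite !inE.
  have [ep|] := eqVneq e.2 p; rewrite ?andbF ?andbT //.
  by case eT: (e \in T) => //=; move: (acT e eT); rewrite ep.
have rp' : inr r != inr p :> V by apply: contra rp => /eqP [->].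
have [e0 [e0T e0r e0cut]] := cut_edge_exists acT rp' (cnT _ _).
move: (e0r); rewrite incident_inr => /eqP e0rE.
rewrite /rdeg (cardsD1 e0 [set e in T | e.2 == r]) !inE e0T e0rE eqxx /=.
rewrite addn1; congr _.+1; apply: eq_card => e; rewrite !inE.
case eT: (e \in T); rewrite ?andbF //=.
have [er|] := eqVneq e.2 r; rewrite ?andbF ?andbT //.
rewrite (tree_cut_side p stT eT) negbK er.
have [->|ne] /= := eqVneq e e0; first by rewrite (negbTE e0cut).
apply/negPn/negP => ecut; move/eqP: ne; apply.
by apply: (cut_edge_uniq eT e0T _ e0r (cnT (inr r) (inr p))) => //; rewrite incident_inr er.
Qed.

End TreePaths.

Lemma card_fibre_disagree (A : finType) (B : eqType) (f1 f2 : A -> B) r :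
  (forall r, #|[set l | f1 l == r]| = #|[set l | f2 l == r]|) ->
  #|[set l | f1 l == r] :&: [set l | f1 l != f2 l]| =
  #|[set l | f2 l == r] :&: [set l | f1 l != f2 l]|.
Proof.
set D := [set l | f1 l != f2 l] => cardE.
have := cardE r; rewrite -(cardsID D [set l | f1 l == r]) -(cardsID D [set l | f2 l == r]).
have -> : [set l | f1 l == r] :\: D = [set l | f2 l == r] :\: D.
  apply/setP => l; rewrite !inE negbK.
  by case E: (f1 l == f2 l); rewrite ?(eqP E) ?andbF.
by move/addIn.
Qed.

Lemma invariant_subset_onto (T : finType) (h : T -> T) (S : {set T}) :
  S != set0 -> h @: S \subset S ->
  exists C : {set T}, [/\ C != set0, C \subset S & h @: C = C].
Proof.
move=> S0 hS; pose inv (C : {set T}) := [&& C != set0, h @: C \subset C & C \subset S].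
have invS : inv S by rewrite /inv S0 hS subxx.
have [C /minsetP[/and3P[C0 hC CS] minC] _] := minset_exists invS.
exists C; split => //; apply: minC => //; apply/and3P; split.
- by rewrite imset_eq0.
- exact: imsetS.
- exact: subset_trans hC CS.
Qed.

Section Compatibility.
Variables n d : nat.
Implicit Types (T M : bgraph n d).

Lemma perfect_matching_imset (C : {set 'I_d}) (a : 'I_d -> 'I_n) (b : 'I_d -> 'I_d) :
  {in C &, injective a} -> {in C &, injective b} -> b @: C = C ->
  perfect_matching (a @: C) C [set (a c, b c) | c in C].
Proof.
move=> ia ib bC; split.
- by move=> e /imsetP[c cC ->] /=; rewrite imset_f //= -bC imset_f.
- move=> l /imsetP[c cC ->]; apply/eqP/cards1P; exists (a c, b c).
  apply/setP => e; rewrite !inE; apply/idP/idP => [|/eqP->]; last by rewrite imset_f ?eqxx.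
  by case/andP=> /imsetP[c' c'C ->] /= /eqP /(ia _ _ c'C cC) ->.
- move=> r; rewrite -{1}bC => /imsetP[c cC ->]; apply/eqP/cards1P; exists (a c, b c).
  apply/setP => e; rewrite !inE; apply/idP/idP => [|/eqP->]; last by rewrite imset_f ?eqxx.
  by case/andP=> /imsetP[c' c'C ->] /= /eqP /(ib _ _ c'C cC) ->.
Qed.

(* The perfect matchings {(a c, c)} in T1 and {(a c, h c)} in T2 between
   a @: C and C must coincide, so h has no cycle of length > 1 on C. *)
Lemma compatible_cycle_fix (T1 T2 : bgraph n d) (C : {set 'I_d})
    (a : 'I_d -> 'I_n) (h : 'I_d -> 'I_d) :
  compatible T1 T2 -> {in C &, injective a} -> h @: C = C ->
  {in C, forall c, (a c, c) \in T1} -> {in C, forall c, (a c, h c) \in T2} ->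
  {in C, forall c, h c = c}.
Proof.
move=> cT ia hC T1a T2a c cC.
have ih : {in C &, injective h} by apply/imset_injP; rewrite hC.
have idC : [set c | c in C] = C by apply/setP => x; rewrite imset_id.
have sub1 : [set (a c, c) | c in C] \subset T1.
  by apply/subsetP => _ /imsetP[x xC ->]; apply: T1a.
have sub2 : [set (a c, h c) | c in C] \subset T2.
  by apply/subsetP => _ /imsetP[x xC ->]; apply: T2a.
have M12 := cT _ _ _ _ sub1 (perfect_matching_imset ia (in2W (@inj_id _)) idC)
  sub2 (perfect_matching_imset ia ih hC).
have : (a c, c) \in [set (a c, h c) | c in C] by rewrite -M12 imset_f.
by case/imsetP => c' c'C [] /(ia _ _ cC c'C) <-.
Qed.

Lemma compatible_fun_eq (T1 T2 : bgraph n d) (f1 f2 : 'I_n -> 'I_d) :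
  compatible T1 T2 -> (forall l, (l, f1 l) \in T1) -> (forall l, (l, f2 l) \in T2) ->
  (forall r, #|[set l | f1 l == r]| = #|[set l | f2 l == r]|) -> f1 =1 f2.
Proof.
move=> cT T1f1 T2f2 cardE l0; apply/eqP/negPn/negP => l0D.
set D := [set l | f1 l != f2 l]; pose S := f1 @: D.
pose ell r := odflt l0 [pick l in D | f1 l == r].
have ellP r : r \in S -> ell r \in D /\ f1 (ell r) = r.
  move=> /imsetP[l lD ->]; rewrite /ell; case: pickP => [l' /andP[l'D /eqP]|none] //.
  by move: (none l); rewrite lD eqxx.
pose h r := f2 (ell r).
have hS : h @: S \subset S.
  apply/subsetP => _ /imsetP[r /ellP[lD _] ->]; rewrite /h; set l := ell r.
  have : 0 < #|[set l' | f2 l' == f2 l] :&: D|.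
    by apply/card_gt0P; exists l; rewrite in_setI lD andbT inE.
  rewrite -card_fibre_disagree // => /card_gt0P[l']; rewrite in_setI inE.
  by case/andP => /eqP <- l'D; apply: imset_f.
have S0 : S != set0 by apply/set0Pn; exists (f1 l0); apply: imset_f; rewrite inE.
have [C [/set0Pn[c cC] CS hC]] := invariant_subset_onto S0 hS.
have ellC x : x \in C -> ell x \in D /\ f1 (ell x) = x by move/(subsetP CS)/ellP.
have ie : {in C &, injective ell}.
  by move=> x y /ellC[_ {2}<-] /ellC[_ {2}<-] ->.
have hc : h c = c.
  apply: (compatible_cycle_fix cT ie hC _ _ cC) => x xC; last exact: T2f2.
  by have [_ {2}<-] := ellC x xC; apply: T1f1.
have [ellcD fc] := ellC c cC.
by move: ellcD hc; rewrite inE fc /h => /[swap] ->; rewrite eqxx.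
Qed.

Lemma tope_graph M : (forall l, ldeg M l = 1%N) ->
  exists f : 'I_n -> 'I_d, forall e, (e \in M) = (e.2 == f e.1).
Proof.
move=> ldegM.
have : forall l, exists g, [set e in M | e.1 == l] = [set g].
  by move=> l; apply/cards1P; rewrite -/(ldeg M l) ldegM.
case/fin_all_exists => g gE; exists (fun l => (g l).2) => e.
have g1 l : (g l).1 = l /\ g l \in M.
  have : g l \in [set e in M | e.1 == l] by rewrite gE set11.
  by rewrite inE => /andP[? /eqP].
apply/idP/idP => [eM|/eqP e2].
  have : e \in [set e' in M | e'.1 == e.1] by rewrite inE eM eqxx.
  by rewrite gE inE => /eqP {1}->.
have [e1 gM] := g1 e.1; suff -> : e = g e.1 by [].
by move: e2 e1 gM; case: e => a b; case: (g _) => a' b' /= -> ->.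
Qed.

Lemma rdeg_graph M (f : 'I_n -> 'I_d) r : (forall e, (e \in M) = (e.2 == f e.1)) ->
  rdeg M r = #|[set l | f l == r]|.
Proof.
move=> ME; rewrite /rdeg -(card_imset _ (_ : injective (fun l => (l, f l)))); last first.
  by move=> a b [].
apply: eq_card => e; rewrite !inE ME; apply/idP/imsetP.
  case/andP => /eqP e2 /eqP er; exists e.1; first by rewrite inE -e2 er.
  by move: e2 er; case: e => a b /= -> _.
by case=> l; rewrite inE => /eqP <- -> /=; rewrite eqxx.
Qed.

Lemma compatible_tope_eq (T1 T2 M1 M2 : bgraph n d) :
  compatible T1 T2 -> M1 \subset T1 -> M2 \subset T2 ->
  (forall l, ldeg M1 l = 1%N) -> (forall l, ldeg M2 l = 1%N) ->
  (forall r, rdeg M1 r = rdeg M2 r) -> M1 = M2.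
Proof.
move=> cT sM1 sM2 /tope_graph[f1 M1E] /tope_graph[f2 M2E] rdegE.
suff f12 : f1 =1 f2 by apply/setP => e; rewrite M1E M2E f12.
apply: (compatible_fun_eq cT).
- by move=> l; apply: (subsetP sM1); rewrite M1E.
- by move=> l; apply: (subsetP sM2); rewrite M2E.
- by move=> r; rewrite -(rdeg_graph r M1E) -(rdeg_graph r M2E).
Qed.

Lemma star_subset_eq M T s : M \subset T -> ldeg M s = 1%N -> ldeg T s = 1%N ->
  [set e in M | e.1 == s] = [set e in T | e.1 == s].
Proof.
move=> sMT ldegM ldegT; apply/eqP.
rewrite eqEcard -/(ldeg M s) -/(ldeg T s) ldegM ldegT leqnn andbT.
by apply/subsetP => e; rewrite !inE => /andP[/(subsetP sMT) -> ->].
Qed.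

End Compatibility.

Local Open Scope ring_scope.

Lemma rooted_tope_rdegZ n d (T : bgraph n d) p r : spanning_tree T ->
  (rdeg (rooted_tope T p) r)%:Z = (rdeg T r)%:Z - (r != p)%:R.
Proof. by move=> stT; rewrite -(rooted_tope_rdeg p r stT) PoszD; case: (r != p); lia. Qed.

Theorem corollary2p10 (n d : nat) (T1 T2 : bgraph n d) (v : 'I_d -> int) (p q : 'I_d) :
  spanning_tree T1 -> spanning_tree T2 -> compatible T1 T2 ->
  (forall i, (rdeg T1 i)%:Z = v i) ->
  (forall i, (rdeg T2 i)%:Z = v i + (i == p)%:R - (i == q)%:R) ->
  (exists M : bgraph n d, M \subset T1 :&: T2 /\
      maximal_tope (fun i => v i - (i != p)%:R) M) /\
  (forall s : 'I_n, ldeg T1 s = 1%N -> ldeg T2 s = 1%N ->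
      [set e in T1 | e.1 == s] = [set e in T2 | e.1 == s]).
Proof.
move=> st1 st2 cT rdeg1 rdeg2.
have rdegM1 r : (rdeg (rooted_tope T1 p) r)%:Z = v r - (r != p)%:R.
  by rewrite rooted_tope_rdegZ // rdeg1.
have rdegM2 r : (rdeg (rooted_tope T2 q) r)%:Z = v r - (r != p)%:R.
  by rewrite rooted_tope_rdegZ // rdeg2; case: (r == p); case: (r == q) => /=; lia.
have M12 : rooted_tope T1 p = rooted_tope T2 q.
  apply: (compatible_tope_eq cT (rooted_tope_sub _ _) (rooted_tope_sub _ _)).
  - by move=> l; apply: rooted_tope_ldeg.
  - by move=> l; apply: rooted_tope_ldeg.
  - by move=> r; apply/eqP; rewrite -eqz_nat rdegM1 rdegM2.
split.
  exists (rooted_tope T1 p); split.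
    by rewrite subsetI rooted_tope_sub M12 rooted_tope_sub.
  by split => [l|r]; [apply: rooted_tope_ldeg | apply: rdegM1].
move=> s leaf1 leaf2.
rewrite -(star_subset_eq (rooted_tope_sub T1 p) (rooted_tope_ldeg p s st1) leaf1).
by rewrite -(star_subset_eq (rooted_tope_sub T2 q) (rooted_tope_ldeg q s st2) leaf2) M12.
Qed.
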